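(* Let $f\in\mathbb{Q}[[y,z]]$ be the formal power series $$f=\frac{(1-y-z)-\sqrt{(1-y-z)^2-4yz}}{2},$$ which is the unique formal power series with zero constant term satisfying $f=(y+f)(z+f)$. Then for all integers $n\ge 1$, $0\le r\le n$ and $k\ge 0$, the number $N_k^{n,r}$ equals the coefficient of $y^r z^{n-r}$ in $(y+z+2f)^{k+1}$.
   Context: A lattice path from $(0,0)$ to $(r,n-r)$ (with integers $n\ge 1$, $0\le r\le n$) is a sequence of lattice points $v_0=(0,0),v_1,\dots,v_n=(r,n-r)$ with each step $v_i-v_{i-1}\in\{(1,0),(0,1)\}$ (an E step or an N step); its vertex set is $\{v_0,\dots,v_n\}$. For $k\ge 0$, $N_k^{n,r}$ denotes the number of ordered pairs $(P,Q)$ of lattice paths from $(0,0)$ to $(r,n-r)$ such that the intersection of their vertex sets, with the two points $(0,0)$ and $(r,n-r)$ removed, has exactly $k$ elements. The square root is the formal power series square root with constant term $1$. *)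

From mathcomp Require Import all_boot all_order all_algebra.
Set Implicit Arguments. Unset Strict Implicit. Unset Printing Implicit Defensive.
Import GRing.Theory.
Local Open Scope ring_scope.

(* A lattice path with n steps is encoded by its step sequence s : n.-tuple bool,
   true = E step (1,0), false = N step (0,1).  It ends at (r, n-r) iff it has
   exactly r E steps. *)
Definition vertex (s : seq bool) (i : nat) : nat * nat :=
  (count id (take i s), count negb (take i s)).

Definition vertices (s : seq bool) : seq (nat * nat) :=
  [seq vertex s i | i <- iota 0 (size s).+1].

Definition common_interior (n r : nat) (P Q : seq bool) : seq (nat * nat) :=
  [seq v <- undup (vertices P) |
     [&& v \in vertices Q, v != (0%N, 0%N) & v != (r, (n - r)%N)]].

Definition is_path_to (n r : nat) (P : n.-tuple bool) : bool := count id P == r.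

Definition Nk (k n r : nat) : nat :=
  #|[set PQ : n.-tuple bool * n.-tuple bool |
      [&& is_path_to r PQ.1, is_path_to r PQ.2 &
          size (common_interior n r PQ.1 PQ.2) == k]]|.

(* a : fps represents sum_{i,j} a i j y^i z^j *)
Definition fps := nat -> nat -> rat.

Definition fps_add (a b : fps) : fps := fun i j => a i j + b i j.
Definition fps_sub (a b : fps) : fps := fun i j => a i j - b i j.
Definition fps_scale (c : rat) (a : fps) : fps := fun i j => c * a i j.
Definition fps_mul (a b : fps) : fps := fun i j =>
  \sum_(p < i.+1) \sum_(q < j.+1) a p q * b (i - p)%N (j - q)%N.
Definition fps_one : fps := fun i j => if (i == 0%N) && (j == 0%N) then 1 else 0.
Definition fps_y : fps := fun i j => if (i == 1%N) && (j == 0%N) then 1 else 0.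
Definition fps_z : fps := fun i j => if (i == 0%N) && (j == 1%N) then 1 else 0.
Definition fps_pow (a : fps) (m : nat) : fps := iter m (fps_mul a) fps_one.

Definition fps_L : fps := fps_sub (fps_sub fps_one fps_y) fps_z.
Definition fps_disc : fps :=
  fps_sub (fps_mul fps_L fps_L) (fps_scale 4 (fps_mul fps_y fps_z)).

From mathcomp Require Import all_boot all_order all_algebra.
From mathcomp Require Import zify ring.
Import GRing.Theory Num.Theory.

Set Implicit Arguments.
Unset Strict Implicit.
Unset Printing Implicit Defensive.

(* A pair of lattice paths of length m is recorded by the numbers r, s of
   their E steps and by the number of i in 1..m at which both paths are at
   the same vertex; after i steps both lie on the line x + y = i, so this
   happens exactly when their prefixes of length i have equally many E steps.
   Deleting the last step of each path gives a recursion in m for these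
   counts.  With P = y + z + 2f, the coefficients of y^(s+d) z^j in P^k f^d
   obey the same recursion in s + j, because P P^k = (y + z) P^k + 2 f P^k
   and f f^d = (y z + (y + z) f + f^2) f^d; the initial values agree because
   f has no term free of y, so f^d has none of y-degree below d.  Pairs with
   k common interior vertices meet k + 1 times, counting the endpoint: this
   is the case r = s, d = 0.  Series are compared through their truncations
   in Q[y][z] below degree N in each variable. *)

Fixpoint bseqs n : seq (seq bool) :=
  if n is n'.+1 then [seq rcons s b | s <- bseqs n', b <- [:: true; false]]
  else [:: [::]].

Lemma mem_bseqs n s : (s \in bseqs n) = (size s == n).
Proof.
elim: n s => [|n IHn] s; first by rewrite inE; case: s.
apply/allpairsPdep/idP => [[t [b [ht _ ->]]]|].
  by rewrite size_rcons eqSS -IHn.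
case/lastP: s => [//|t b]; rewrite size_rcons eqSS -IHn => ht.
by exists t, b; rewrite !inE; case: b; rewrite eqxx ?orbT.
Qed.

Lemma bseqs_uniq n : uniq (bseqs n).
Proof.
elim: n => [//|n IHn]; apply: allpairs_uniq => //.
by move=> [s a] [t b] _ _ /= /rcons_inj.
Qed.

Section BigBseqs.
Variables (R : Type) (idx : R) (op : Monoid.com_law idx).

Lemma big_bseqsS (F : seq bool -> R) n :
  \big[op/idx]_(s <- bseqs n.+1) F s =
  \big[op/idx]_(s <- bseqs n) op (F (rcons s true)) (F (rcons s false)).
Proof.
rewrite big_allpairs_dep; apply: eq_bigr => s _.
by rewrite !big_cons big_nil Monoid.mulm1.
Qed.

Lemma big_tuple_bseqs n (F : seq bool -> R) :
  \big[op/idx]_(t : n.-tuple bool) F t = \big[op/idx]_(s <- bseqs n) F s.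
Proof.
rewrite -(big_map val xpredT F); apply/perm_big/uniq_perm.
- by rewrite map_inj_uniq ?index_enum_uniq //; apply: val_inj.
- exact: bseqs_uniq.
move=> s; rewrite mem_bseqs; apply/mapP/idP => [[t _ ->]|hs].
  by rewrite size_tuple.
by exists (Tuple hs); rewrite ?mem_index_enum.
Qed.

End BigBseqs.

Definition meets (P Q : seq bool) : nat :=
  count (fun i => count id (take i P) == count id (take i Q)) (iota 1 (size P)).

Lemma count_id_rcons (s : seq bool) b : count id (rcons s b) = count id s + b.
Proof. by rewrite -cats1 count_cat /= addn0. Qed.

Lemma meets_rcons P Q a b : size P = size Q ->
  meets (rcons P a) (rcons Q b) =
  meets P Q + (count id (rcons P a) == count id (rcons Q b)).
Proof.
move=> eqPQ; rewrite /meets size_rcons -[(size P).+1]addn1 iotaD count_cat /= addn0 add1n.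
congr (_ + _).
  apply: eq_in_count => i; rewrite mem_iota => /andP [_ lti].
  by rewrite -!cats1 !takel_cat // -eqPQ; lia.
by rewrite !take_oversize ?size_rcons // eqPQ.
Qed.

Lemma meetsC P Q : size P = size Q -> meets P Q = meets Q P.
Proof. by move=> eqPQ; rewrite /meets eqPQ; apply: eq_count => i /=; rewrite eq_sym. Qed.

Definition yshift {R : nmodType} (u : nat -> nat -> R) i j : R :=
  if i is i'.+1 then u i' j else 0.
Definition zshift {R : nmodType} (u : nat -> nat -> R) i j : R :=
  if j is j'.+1 then u i j' else 0.

Definition pair_count m k r s : nat :=
  \sum_(P <- bseqs m) \sum_(Q <- bseqs m)
     [&& count id P == r, count id Q == s & meets P Q == k].

Lemma pair_countC m k r s : pair_count m k r s = pair_count m k s r.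
Proof.
rewrite /pair_count exchange_big; apply: eq_big_seq => Q hQ; apply: eq_big_seq => P hP.
move: hP hQ; rewrite !mem_bseqs => /eqP hP /eqP hQ.
by rewrite meetsC ?hP ?hQ // andbA [(_ == r) && _]andbC -andbA.
Qed.

Lemma pair_count_gt m k r s : m < r -> pair_count m k r s = 0.
Proof.
move=> ltmr; rewrite /pair_count big_seq big1 // => P; rewrite mem_bseqs => /eqP sizeP.
rewrite big1 // => Q _; have := count_size id P; rewrite sizeP.
by case: eqP => // ->; rewrite leqNgt ltmr.
Qed.

Lemma pair_count0 k r s : pair_count 0 k r s = [&& r == 0, s == 0 & k == 0].
Proof. by rewrite /pair_count !big_cons !big_nil /= /meets /= !addn0 ![0 == _]eq_sym. Qed.

Lemma pair_count_last m k r s a b :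
  \sum_(P <- bseqs m) \sum_(Q <- bseqs m)
    [&& count id (rcons P a) == r, count id (rcons Q b) == s &
        meets (rcons P a) (rcons Q b) == k]
  = if [&& a <= r, b <= s & (r == s) <= k]
    then pair_count m (k - (r == s)) (r - a) (s - b) else 0.
Proof.
have split_last P Q : P \in bseqs m -> Q \in bseqs m ->
    [&& count id (rcons P a) == r, count id (rcons Q b) == s &
        meets (rcons P a) (rcons Q b) == k]
    = [&& a <= r, b <= s & (r == s) <= k] &&
      [&& count id P == r - a, count id Q == s - b & meets P Q == k - (r == s)].
  rewrite !mem_bseqs => /eqP sizeP /eqP sizeQ.
  rewrite meets_rcons ?sizeP ?sizeQ // !count_id_rcons.
  move: (count id P) (count id Q) (meets P Q) => x y z.
  by case: a; case: b; case: (r =P s); do ![case: eqP => /= ?] => //; lia.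
rewrite /pair_count; case: ifP => cond.
  by apply: eq_big_seq => P hP; apply: eq_big_seq => Q hQ; rewrite split_last // cond.
rewrite big_seq big1 // => P hP; rewrite big_seq big1 // => Q hQ.
by rewrite split_last // cond.
Qed.

Lemma pair_countS m k r s : pair_count m.+1 k r s =
  if (r == s) && (k == 0) then 0 else
  let u := pair_count m (k - (r == s)) in
  (yshift (zshift u) r s + yshift u r s + zshift u r s + u r s).
Proof.
rewrite {1}/pair_count big_bseqsS.
under eq_bigr do rewrite !big_bseqsS !big_split.
rewrite !big_split /= !pair_count_last !subn0 !subn1 /=.
have -> : ((r == s) <= k) = ~~ ((r == s) && (k == 0)) by case: (r == s); case: k.
case: ((r == s) && (k == 0)); rewrite /= ?andbF //.
by case: r => [|r]; case: s => [|s]; rewrite /= ?add0n ?addn0 ?addnA.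
Qed.

Lemma vertex_sum (s : seq bool) i : i <= size s ->
  (vertex s i).1 + (vertex s i).2 = i.
Proof. by move=> le_is; rewrite /= count_predC size_takel. Qed.

Lemma vertex_size (s : seq bool) :
  vertex s (size s) = (count id s, size s - count id s).
Proof.
rewrite /vertex take_size; congr (_, _).
by rewrite -(count_predC id s) addKn.
Qed.

Lemma vertices_uniq (s : seq bool) : uniq (vertices s).
Proof.
rewrite map_inj_in_uniq ?iota_uniq // => i j.
rewrite !mem_iota !add0n !ltnS => /andP [_ le_is] /andP [_ le_js] eq_ij.
by rewrite -(vertex_sum le_is) -(vertex_sum le_js) eq_ij.
Qed.

Lemma mem_vertices (P Q : seq bool) i : size P = size Q -> i <= size P ->
  (vertex P i \in vertices Q) = (count id (take i P) == count id (take i Q)).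
Proof.
move=> eqPQ le_iP; have le_iQ : i <= size Q by rewrite -eqPQ.
apply/mapP/eqP => [[j]|eq_count].
  rewrite mem_iota ltnS => /andP [_ le_jQ] eq_v.
  move: (vertex_sum le_iP) (vertex_sum le_jQ); rewrite eq_v => -> eq_ij.
  by move: eq_v; rewrite eq_ij => -[].
exists i; first by rewrite mem_iota ltnS.
move: (vertex_sum le_iP) (vertex_sum le_iQ); rewrite /vertex /= eq_count.
by move=> hP hQ; congr (_, _); lia.
Qed.

Lemma size_common_interior m r (P Q : seq bool) :
  size P = m.+1 -> size Q = m.+1 -> count id P = r -> count id Q = r ->
  (size (common_interior m.+1 r P Q)).+1 = meets P Q.
Proof.
move=> sizeP sizeQ countP countQ.
set meet_at := fun i => count id (take i P) == count id (take i Q).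
set inner := fun v => [&& v \in vertices Q, v != (0, 0) & v != (r, m.+1 - r)].
have iota1 : iota 1 m.+1 = rcons (iota 1 m) m.+1.
  by rewrite -(addn1 m) iotaD -cats1 add1n addn1.
have endP : vertex P m.+1 = (r, m.+1 - r) by rewrite -sizeP vertex_size countP.
have inner_mid : {in iota 1 m, preim (vertex P) inner =1 meet_at}.
  move=> i; rewrite mem_iota => /andP [lt0i ltim].
  have le_iP : i <= size P by rewrite sizeP; lia.
  rewrite /= /inner (mem_vertices _ le_iP) ?sizeP ?sizeQ // /meet_at.
  case: eqP => //= _; apply/andP; split; apply/eqP => eq_v;
    move: (vertex_sum le_iP); rewrite eq_v /=; lia.
rewrite /common_interior undup_id ?vertices_uniq // size_filter /vertices.
rewrite count_map sizeP -/inner (_ : iota 0 m.+2 = 0 :: iota 1 m.+1) // iota1.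
rewrite /meets sizeP iota1 -!cats1 /= !count_cat /= (eq_in_count inner_mid).
rewrite /inner endP /vertex take0 !andbF /meet_at !take_oversize ?sizeP ?sizeQ //.
by rewrite countP countQ !eqxx !andbF /= !addn0 add0n addn1.
Qed.

Lemma Nk_pair_count k n r : 0 < n -> Nk k n r = pair_count n k.+1 r r.
Proof.
case: n => [//|m] _.
pose meet_pair (P Q : seq bool) : nat :=
  [&& count id P == r, count id Q == r & size (common_interior m.+1 r P Q) == k].
have -> : Nk k m.+1 r =
    \sum_(P : m.+1.-tuple bool) \sum_(Q : m.+1.-tuple bool) meet_pair P Q.
  rewrite /Nk cardsE -sum1_card big_mkcond /= pair_bigA /=.
  by apply: eq_bigr => -[P Q] _; rewrite unfold_in.
under eq_bigr do rewrite (big_tuple_bseqs _ _ (meet_pair _)).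
rewrite (big_tuple_bseqs _ _ (fun P => \sum_(Q <- bseqs m.+1) meet_pair P Q)).
apply: eq_big_seq => P; rewrite mem_bseqs => /eqP sizeP.
apply: eq_big_seq => Q; rewrite mem_bseqs => /eqP sizeQ.
rewrite /meet_pair; case: (count id P =P r) => //= countP.
case: (count id Q =P r) => //= countQ.
by rewrite -(size_common_interior sizeP sizeQ countP countQ) eqSS.
Qed.

(* Pairs of paths ending at (s + d, j - d) and (s, j) (none if j < d). *)
Definition pair_count_at k d s j := pair_count (s + j) k (s + d) s.

Lemma pair_count_at0 s j : pair_count_at 0 0 s j = (s == 0) && (j == 0).
Proof.
rewrite /pair_count_at addn0.
case: s => [|s]; case: j => [|j]; rewrite /= ?add0n ?addn0 ?addSn.
  by rewrite pair_count0.
all: by rewrite pair_countS eqxx.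
Qed.

Lemma pair_count_atS0 k s j :
  pair_count_at k.+1 0 s j = yshift (pair_count_at k 0) s j +
    zshift (pair_count_at k 0) s j + 2 * yshift (pair_count_at k 1) s j.
Proof.
rewrite /pair_count_at /yshift /zshift addn0.
case: s => [|s]; case: j => [|j]; rewrite ?pair_count0 // ?addSn ?addnS ?add0n ?addn0.
- by rewrite pair_countS eqxx /= subn1.
- rewrite pair_countS eqxx /= subn1 /= (@pair_count_gt s k s.+1 s.+1) //.
  by rewrite (pair_countC _ _ s s.+1); lia.
by rewrite pair_countS eqxx /= subn1 /= (pair_countC _ _ s s.+1); lia.
Qed.

Lemma pair_count_atS k d s j :
  pair_count_at k d.+1 s j = zshift (pair_count_at k d) s j +
    yshift (pair_count_at k d.+1) s j + zshift (pair_count_at k d.+1) s j +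
    yshift (pair_count_at k d.+2) s j.
Proof.
rewrite /pair_count_at /yshift /zshift.
case: s => [|s]; case: j => [|j]; rewrite ?add0n ?addn0 ?addSn ?addnS.
- by rewrite pair_count_gt.
- by rewrite pair_countS /= subn0 addn0.
- by rewrite !pair_count_gt; lia.
rewrite pair_countS (_ : ((s + d).+2 == s.+1) = false) /=; last by lia.
by rewrite subn0; lia.
Qed.

Local Open Scope ring_scope.

(* [b k d s j] plays the role of the coefficient of y^(s+d) z^j in P^k f^d. *)
Definition coef_rec (R : pzSemiRingType) (N : nat) (b : nat -> nat -> nat -> nat -> R) :=
  [/\ forall s j, b 0%N 0%N s j = ((s == 0%N) && (j == 0%N))%:R,
      forall k s j, (s < N)%N -> (j < N)%N ->
        b k.+1 0%N s j =
          yshift (b k 0%N) s j + zshift (b k 0%N) s j + yshift (b k 1%N) s j *+ 2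
    & forall k d s j, (s + d.+1 < N)%N -> (j < N)%N ->
        b k d.+1 s j = zshift (b k d) s j + yshift (b k d.+1) s j +
                       zshift (b k d.+1) s j + yshift (b k d.+2) s j].

Lemma coef_rec_unique (R : pzSemiRingType) N (b c : nat -> nat -> nat -> nat -> R) :
  coef_rec N b -> coef_rec N c ->
  forall k d s j, (s + d < N)%N -> (j < N)%N -> b k d s j = c k d s j.
Proof.
case=> b0 bP bF [c0 cP cF] k d s j.
suff eq_bc n : forall k d s j, (s + j = n)%N -> (s + d < N)%N -> (j < N)%N ->
  b k d s j = c k d s j by exact: eq_bc.
elim: n => [|n IHn] {}k {}d {}s {}j.
  case: s => [|s]; case: j => [|j] // _ lt_sd lt_j.
  case: d lt_sd => [|d] lt_sd; first case: k => [|k].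
  - by rewrite b0 c0.
  - by rewrite bP ?cP.
  - by rewrite bF ?cF.
move=> sum_sj lt_sd lt_j; case: d lt_sd => [|d] lt_sd; first case: k => [|k].
- by rewrite b0 c0.
- rewrite addn0 in lt_sd; rewrite bP ?cP //.
  case: s sum_sj lt_sd => [|s] sum_sj lt_sd; case: j sum_sj lt_j => [|j] sum_sj lt_j;
    by rewrite /= ?IHn //; lia.
- rewrite bF ?cF //.
  case: s sum_sj lt_sd => [|s] sum_sj lt_sd; case: j sum_sj lt_j => [|j] sum_sj lt_j;
    by rewrite /= ?IHn //; lia.
Qed.

Lemma coef_rec_pair_count (R : pzSemiRingType) N :
  coef_rec N (fun k d s j => (pair_count_at k d s j)%:R : R).
Proof.
split=> [s j | k s j _ _ | k d s j _ _].
- by rewrite pair_count_at0.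
- by rewrite pair_count_atS0 natrD natrM mulr_natl natrD; case: s; case: j.
- by rewrite pair_count_atS !natrD; case: s; case: j.
Qed.

Local Notation poly2 := {poly {poly rat}}.

Definition coef2 (p : poly2) : fps := fun i j => p`_j`_i.
Definition yvar : poly2 := 'X%:P.
Definition zvar : poly2 := 'X.

Lemma coef2D p q i j : coef2 (p + q) i j = coef2 p i j + coef2 q i j.
Proof. by rewrite /coef2 !coefD. Qed.

Lemma coef2B p q i j : coef2 (p - q) i j = coef2 p i j - coef2 q i j.
Proof. by rewrite /coef2 !coefB. Qed.

Lemma coef2Mn p n i j : coef2 (p *+ n) i j = coef2 p i j *+ n.
Proof. by rewrite /coef2 !coefMn. Qed.

Lemma coef2M p q i j : coef2 (p * q) i j = fps_mul (coef2 p) (coef2 q) i j.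
Proof.
rewrite /coef2 /fps_mul coefM coef_sum exchange_big.
by apply: eq_bigr => q' _; rewrite coefM.
Qed.

Lemma coef2_1 i j : coef2 1 i j = fps_one i j.
Proof.
rewrite /coef2 /fps_one coef1; case: j => [|j] /=; last by rewrite coef0 andbF.
by rewrite coef1 andbT; case: (i == 0%N).
Qed.

Lemma coef2_yvar i j : coef2 yvar i j = fps_y i j.
Proof.
rewrite /coef2 /fps_y coefC; case: j => [|j] /=; last by rewrite coef0 andbF.
by rewrite coefX andbT; case: (i == 1%N).
Qed.

Lemma coef2_zvar i j : coef2 zvar i j = fps_z i j.
Proof.
rewrite /coef2 /fps_z coefX; case: j => [|[|j]] /=; rewrite ?coef0 ?andbF //.
by rewrite coef1 andbT; case: (i == 0%N).
Qed.

Lemma coef2_yvarM p i j : coef2 (yvar * p) i j = yshift (coef2 p) i j.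
Proof. by rewrite /coef2 coefCM coefXM; case: i. Qed.

Lemma coef2_zvarM p i j : coef2 (zvar * p) i j = zshift (coef2 p) i j.
Proof. by rewrite /coef2 coefXM; case: j => //=; rewrite coef0. Qed.

Definition fps_eqlt N (a b : fps) :=
  forall i j, (i < N)%N -> (j < N)%N -> a i j = b i j.

Lemma fps_eqlt_refl N a : fps_eqlt N a a.
Proof. by []. Qed.

Lemma fps_mul_eqlt N a a' b b' :
  fps_eqlt N a a' -> fps_eqlt N b b' -> fps_eqlt N (fps_mul a b) (fps_mul a' b').
Proof.
move=> eq_a eq_b i j lt_iN lt_jN; apply: eq_bigr => p _; apply: eq_bigr => q _.
have := ltn_ord p; have := ltn_ord q; rewrite !ltnS => le_qj le_pi.
by rewrite eq_a ?eq_b //; lia.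
Qed.

Definition trunc N (a : fps) : poly2 := \poly_(j < N) \poly_(i < N) a i j.

Lemma coef2_trunc N a : fps_eqlt N (coef2 (trunc N a)) a.
Proof. by move=> i j lt_iN lt_jN; rewrite /coef2 coef_poly lt_jN coef_poly lt_iN. Qed.

Section PairSeries.
Variables (N : nat) (F : poly2).
Hypothesis F00 : coef2 F 0 0 = 0.
Hypothesis F_funeq : fps_eqlt N (coef2 F) (coef2 ((yvar + F) * (zvar + F))).

Lemma coef2F_0j j : (j < N)%N -> coef2 F 0 j = 0.
Proof.
elim/ltn_ind: j => j IHj lt_jN; rewrite F_funeq ?(leq_ltn_trans _ lt_jN) //.
rewrite coef2M /fps_mul big_ord1 big1 // => q _.
rewrite /= subn0 !coef2D coef2_yvar coef2_zvar /fps_y /fps_z /= add0r.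
have := ltn_ord q; rewrite ltnS leq_eqVlt => /predU1P [->|lt_qj].
  by rewrite subnn F00 addr0 mulr0.
by rewrite (IHj q) ?mul0r //; lia.
Qed.

Lemma coef2_FX_lt p d i j : (i < d)%N -> (j < N)%N -> coef2 (p * F ^+ d) i j = 0.
Proof.
elim: d i j => [//|d IHd] i j lt_id lt_jN.
rewrite exprSr mulrA coef2M /fps_mul big1 // => a _; rewrite big1 // => b _.
have := ltn_ord a; have := ltn_ord b; rewrite !ltnS => le_bj le_ai.
case: (ltnP a d) => [lt_ad | le_da]; first by rewrite IHd ?mul0r //; lia.
by rewrite (_ : (i - a = 0)%N) ?coef2F_0j ?mulr0 //; lia.
Qed.

Lemma coef2_FX_shift p d s j : (j < N)%N ->
  coef2 (p * F ^+ d.+1) (s + d)%N j =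
  yshift (fun s j => coef2 (p * F ^+ d.+1) (s + d.+1)%N j) s j.
Proof. by case: s => [|s] lt_jN /=; [rewrite coef2_FX_lt | rewrite addSnnS]. Qed.

Definition pair_series := yvar + zvar + F *+ 2.

Lemma coef_rec_pair_series :
  coef_rec N (fun k d s j => coef2 (pair_series ^+ k * F ^+ d) (s + d)%N j).
Proof.
split=> [s j | k s j lt_sN lt_jN | k d s j lt_sdN lt_jN].
- by rewrite mulr1 addn0 coef2_1 /fps_one; case: (_ && _).
- rewrite exprS mulr1 addn0.
  have -> : pair_series * pair_series ^+ k = yvar * pair_series ^+ k +
      zvar * pair_series ^+ k + (pair_series ^+ k * F ^+ 1) *+ 2.
    by rewrite /pair_series; ring.
  rewrite coef2D coef2Mn coef2D coef2_yvarM coef2_zvarM.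
  rewrite -[s in coef2 _ s]addn0 coef2_FX_shift //.
  by case: s {lt_sN}; case: j {lt_jN} => * /=; rewrite ?expr0 ?mulr1 ?addn0.
- set q := pair_series ^+ k * F ^+ d; set q1 := pair_series ^+ k * F ^+ d.+1.
  rewrite {1}/q1 exprSr mulrA -/q coef2M.
  rewrite (fps_mul_eqlt (@fps_eqlt_refl N (coef2 q)) F_funeq) -?coef2M //; try lia.
  have -> : q * ((yvar + F) * (zvar + F)) =
      yvar * (zvar * q) + yvar * q1 + zvar * q1 + pair_series ^+ k * F ^+ d.+2.
    by rewrite /q /q1 !exprS; ring.
  rewrite !coef2D (coef2_FX_shift _ d.+1) // !coef2_yvarM !coef2_zvarM addnS /=.
  rewrite /q1 coef2_FX_shift // coef2_zvarM.
  by case: j {lt_jN} => [|j] /=; rewrite ?addnS.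
Qed.
End PairSeries.

Definition poly_L : poly2 := 1 - yvar - zvar.
Definition poly_disc : poly2 := poly_L * poly_L - (yvar * zvar) *+ 4.

Lemma coef2_poly_L i j : coef2 poly_L i j = fps_L i j.
Proof. by rewrite !coef2B coef2_1 coef2_yvar coef2_zvar. Qed.

Lemma coef2_poly_disc N : fps_eqlt N (coef2 poly_disc) fps_disc.
Proof.
have eqL : fps_eqlt N (coef2 poly_L) fps_L by move=> *; apply: coef2_poly_L.
have eqY : fps_eqlt N (coef2 yvar) fps_y by move=> *; apply: coef2_yvar.
have eqZ : fps_eqlt N (coef2 zvar) fps_z by move=> *; apply: coef2_zvar.
move=> i j lt_iN lt_jN; rewrite coef2B coef2Mn -mulr_natl !coef2M.
by rewrite (fps_mul_eqlt eqL eqL) ?(fps_mul_eqlt eqY eqZ).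
Qed.

Section TruncatedRoot.
Variables (g : fps) (N : nat).
Hypothesis g00 : g 0%N 0%N = 1.
Hypothesis g_sqr : forall i j, fps_mul g g i j = fps_disc i j.
Hypothesis N_gt0 : (0 < N)%N.
Let f := fps_scale (1 / 2) (fps_sub fps_L g).
Let F := trunc N f.

Lemma coef2_trunc_f00 : coef2 F 0 0 = 0.
Proof.
rewrite coef2_trunc // /f /fps_scale /fps_sub /fps_L /fps_sub g00.
by rewrite /fps_one /fps_y /fps_z /=; field.
Qed.

Lemma coef2_sqrt : fps_eqlt N (coef2 (poly_L - F *+ 2)) g.
Proof.
move=> i j lt_iN lt_jN.
rewrite coef2B coef2Mn coef2_poly_L coef2_trunc // /f /fps_scale /fps_sub.
by rewrite -mulr_natl; field.
Qed.

Lemma trunc_f_funeq : fps_eqlt N (coef2 F) (coef2 ((yvar + F) * (zvar + F))).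
Proof.
move=> i j lt_iN lt_jN; apply/eqP; rewrite eq_sym -subr_eq0 -coef2B.
have : coef2 ((poly_L - F *+ 2) * (poly_L - F *+ 2) - poly_disc) i j = 0.
  rewrite coef2B coef2M (fps_mul_eqlt coef2_sqrt coef2_sqrt) // g_sqr.
  by rewrite (coef2_poly_disc (N := N)) // subrr.
have -> : (poly_L - F *+ 2) * (poly_L - F *+ 2) - poly_disc =
    ((yvar + F) * (zvar + F) - F) *+ 4.
  by rewrite /poly_disc /poly_L; ring.
by rewrite coef2Mn -mulr_natl => /eqP; rewrite mulf_eq0 pnatr_eq0 => /eqP ->.
Qed.

Lemma fps_pow_coef2 k :
  fps_eqlt N (fps_pow (fps_add (fps_add fps_y fps_z) (fps_scale 2 f)) k)
             (coef2 (pair_series F ^+ k)).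
Proof.
elim: k => [|k IHk] i j lt_iN lt_jN; first by rewrite coef2_1.
rewrite exprS coef2M /=; apply: fps_mul_eqlt IHk _ _ lt_iN lt_jN => {}i {}j lt_iN lt_jN.
rewrite /pair_series coef2D coef2Mn coef2D coef2_yvar coef2_zvar coef2_trunc //.
by rewrite /fps_add /fps_scale mulr_natl.
Qed.
End TruncatedRoot.

Theorem mainTheorem3 (g : fps)
  (hg0 : g 0%N 0%N = 1)
  (hg : forall i j, fps_mul g g i j = fps_disc i j) :
  let f : fps := fps_scale (1 / 2) (fps_sub fps_L g) in
  forall n r k : nat, (1 <= n)%N -> (r <= n)%N ->
    (Nk k n r)%:R =
      fps_pow (fps_add (fps_add fps_y fps_z) (fps_scale 2 f)) k.+1 r (n - r)%N.
Proof.
move=> f n r k n_gt0 le_rn.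
have N_gt0 : (0 < n.+1)%N by [].
have count_eq : Nk k n r = pair_count_at k.+1 0 r (n - r).
  by rewrite Nk_pair_count // /pair_count_at addn0 subnKC.
rewrite count_eq (coef_rec_unique (coef_rec_pair_count _ n.+1)
  (coef_rec_pair_series (coef2_trunc_f00 hg0 N_gt0) (trunc_f_funeq (N := n.+1) hg)))
  ?addn0 ?ltnS ?leq_subr // expr0 mulr1.
by rewrite (fps_pow_coef2 g (N := n.+1)) ?ltnS ?leq_subr.
Qed.
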